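(* Let $\mathbb{X}$ be a real or complex Banach algebra with identity, $\mathcal{G}$ its group of units, $k\ge1$ an integer, $a_0,\dots,a_k,b_0,\dots,b_k\in\mathbb{X}$ with $a_k\ne0$ or $b_k\ne0$, and $g_n:\mathbb{X}\to\mathbb{X}$ ($n\ge0$) functions satisfying $|g_n(\xi)|\le\sigma|\xi|$ for all $\xi\in\mathbb{X}$ and all $n$, for some real $\sigma>0$. Then every solution $\{x_n\}$ of $$x_{n+1}=\sum_{i=0}^{k}a_ix_{n-i}+g_n\Big(\sum_{i=0}^{k}b_ix_{n-i}\Big),\quad n\ge0,$$ converges to $0$ in norm provided either (a) $\sum_{i=0}^{k}(|a_i|+\sigma|b_i|)<1$; or (b) the polynomials $P(\xi)=\xi^{k+1}-\sum_{i=0}^{k}a_i\xi^{k-i}$ and $Q(\xi)=\sum_{i=0}^{k}b_i\xi^{k-i}$ have a common root $\rho\in\mathcal{G}$ with $|\rho|<1$ and $$\sum_{i=0}^{k-1}\big(|p_i|+\sigma|q_i|\big)<1,$$ where $p_i=\rho^{i+1}-a_0\rho^i-\cdots-a_i$ and $q_i=b_0\rho^i+b_1\rho^{i-1}+\cdots+b_i$ for $i=0,\dots,k-1$.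
   Context: A Banach algebra with identity is a Banach space $\mathbb{X}$ (norm $|\cdot|$) with an associative bilinear multiplication satisfying $|xy|\le|x||y|$ and an identity $1$ with $|1|=1$. $\mathcal{G}$ is the set of invertible elements. Polynomials are evaluated with coefficients on the left. Solutions are generated by iteration from arbitrary initial values $x_0,\dots,x_{-k}\in\mathbb{X}$. *)

From Stdlib Require Import Reals.
Open Scope R_scope.

(* A (real) Banach algebra with identity. A complex Banach algebra is in
   particular a real one (restriction of scalars), so this covers both. *)
Record BanachAlgebra := {
  carrier :> Type;
  zero : carrier;
  one : carrier;
  add : carrier -> carrier -> carrier;
  opp : carrier -> carrier;
  mul : carrier -> carrier -> carrier;
  scal : R -> carrier -> carrier;
  norm : carrier -> R;
  add_assoc : forall x y z, add x (add y z) = add (add x y) z;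
  add_comm : forall x y, add x y = add y x;
  add_zero : forall x, add x zero = x;
  add_opp : forall x, add x (opp x) = zero;
  scal_one : forall x, scal 1 x = x;
  scal_assoc : forall r s x, scal r (scal s x) = scal (r * s) x;
  scal_addr : forall r x y, scal r (add x y) = add (scal r x) (scal r y);
  scal_addl : forall r s x, scal (r + s) x = add (scal r x) (scal s x);
  mul_assoc : forall x y z, mul x (mul y z) = mul (mul x y) z;
  mul_addl : forall x y z, mul (add x y) z = add (mul x z) (mul y z);
  mul_addr : forall x y z, mul x (add y z) = add (mul x y) (mul x z);
  mul_scall : forall r x y, mul (scal r x) y = scal r (mul x y);
  mul_scalr : forall r x y, mul x (scal r y) = scal r (mul x y);
  mul_one_l : forall x, mul one x = x;
  mul_one_r : forall x, mul x one = x;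
  norm_eq0 : forall x, norm x = 0 -> x = zero;
  norm_zero : norm zero = 0;
  norm_triangle : forall x y, norm (add x y) <= norm x + norm y;
  norm_scal : forall r x, norm (scal r x) = Rabs r * norm x;
  norm_mul : forall x y, norm (mul x y) <= norm x * norm y;
  norm_one : norm one = 1;
  complete : forall u : nat -> carrier,
    (forall eps, eps > 0 -> exists N, forall m n, (m >= N)%nat -> (n >= N)%nat ->
        norm (add (u m) (opp (u n))) < eps) ->
    exists l, forall eps, eps > 0 -> exists N, forall n, (n >= N)%nat ->
        norm (add (u n) (opp l)) < eps
}.

Arguments zero {b}.
Arguments one {b}.
Arguments add {b}.
Arguments opp {b}.
Arguments mul {b}.
Arguments scal {b}.
Arguments norm {b}.

Definition sub {X : BanachAlgebra} (x y : X) : X := add x (opp y).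

Fixpoint bpow {X : BanachAlgebra} (x : X) (n : nat) : X :=
  match n with O => one | S m => mul x (bpow x m) end.

Fixpoint bsum {X : BanachAlgebra} (n : nat) (f : nat -> X) : X :=
  match n with O => zero | S m => add (bsum m f) (f m) end.

Definition is_unit {X : BanachAlgebra} (x : X) : Prop :=
  exists y : X, mul x y = one /\ mul y x = one.

Definition conv_to_zero {X : BanachAlgebra} (u : nat -> X) : Prop :=
  forall eps, eps > 0 -> exists N, forall n, (n >= N)%nat -> norm (u n) < eps.

Definition polyP {X : BanachAlgebra} (k : nat) (a : nat -> X) (xi : X) : X :=
  sub (bpow xi (S k)) (bsum (S k) (fun i => mul (a i) (bpow xi (k - i)))).

Definition polyQ {X : BanachAlgebra} (k : nat) (b : nat -> X) (xi : X) : X :=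
  bsum (S k) (fun i => mul (b i) (bpow xi (k - i))).

Definition pcoef {X : BanachAlgebra} (a : nat -> X) (rho : X) (i : nat) : X :=
  sub (bpow rho (S i)) (bsum (S i) (fun j => mul (a j) (bpow rho (i - j)))).

Definition qcoef {X : BanachAlgebra} (b : nat -> X) (rho : X) (i : nat) : X :=
  bsum (S i) (fun j => mul (b j) (bpow rho (i - j))).

From Stdlib Require Import Reals Lra Lia.
Open Scope R_scope.

(* Both cases reduce to one scalar fact about nonnegative sequences: if
   v_{n+m+1} <= sum_{i<=m} c_i v_{n+m-i} with c_i >= 0 and sum c_i < 1, then
   v_n -> 0 (the sequence stays below its initial maximum, and every block of
   m+1 steps multiplies a tail bound by theta = sum c_i).
   (a) Taking norms in the recurrence with |g_n(xi)| <= sigma |xi| gives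
       exactly such an inequality for v_n = |y_n| with c_i = |a_i| + sigma |b_i|.
   (b) With the common root rho, set z_j = y_{j+1} - rho y_j.  A telescoping
       identity (the Horner recursions p_{i+1} = p_i rho - a_{i+1},
       q_{i+1} = q_i rho + b_{i+1}, together with P(rho) = Q(rho) = 0)
       turns the recurrence of order k+1 for y into one of order k for z
       with coefficients -p_i and q_i; so z_n -> 0 by the scalar fact.
       Finally |y_{n+1}| <= |rho| |y_n| + |z_n| with |rho| < 1 forces y_n -> 0.
   The file develops the scalar decay lemmas, then elementary algebra in a
   Banach algebra (norm estimate, Horner recursions, telescoping identity),
   the key estimate shared by both cases, case (b), and the theorem.
   The hypothesis k >= 1 only serves to write k = m + 1 in case (b). *)

Definition vanishes (v : nat -> R) : Prop :=
  forall eps, eps > 0 -> exists N, forall n, (n >= N)%nat -> v n < eps.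

Lemma le_sum_term (v : nat -> R) : (forall n, 0 <= v n) ->
  forall N j, (j <= N)%nat -> v j <= sum_f_R0 v N.
Proof.
  intros Hv N; induction N as [|N IH]; intros j Hj.
  - assert (j = 0%nat) by lia; subst; simpl; lra.
  - simpl. destruct (Nat.eq_dec j (S N)) as [->|Hne].
    + pose proof (cond_pos_sum v N Hv); lra.
    + pose proof (IH j ltac:(lia)); pose proof (Hv (S N)); lra.
Qed.

Lemma vanishes_geometric (v : nat -> R) (p : nat) (B theta : R) :
  0 <= B -> 0 <= theta < 1 ->
  (forall q j, (q * p <= j)%nat -> v j <= B * theta ^ q) -> vanishes v.
Proof.
  intros HB Hth Hdom eps Heps.
  assert (Habs : Rabs theta < 1) by (rewrite Rabs_right; lra).
  destruct (pow_lt_1_zero theta Habs (eps / (B + 1))) as [q Hq].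
  { apply Rdiv_lt_0_compat; lra. }
  exists (q * p)%nat. intros n Hn.
  eapply Rle_lt_trans; [apply Hdom; exact Hn|].
  specialize (Hq q (le_n _)).
  assert (Hpow : 0 <= theta ^ q) by (apply pow_le; lra).
  rewrite Rabs_right in Hq by lra.
  apply Rmult_lt_compat_l with (r := B + 1) in Hq; [|lra].
  replace ((B + 1) * (eps / (B + 1))) with eps in Hq by (field; lra).
  nra.
Qed.

Section LaggedRecurrence.
Variables (m : nat) (c v : nat -> R).
Hypothesis c_ge0 : forall i, 0 <= c i.
Hypothesis v_ge0 : forall n, 0 <= v n.
Hypothesis theta_lt1 : sum_f_R0 c m < 1.
Hypothesis v_rec :
  forall n, v (n + m + 1)%nat <= sum_f_R0 (fun i => c i * v (n + m - i)%nat) m.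

Let theta := sum_f_R0 c m.

Lemma lagged_step j beta : (m < j)%nat ->
  (forall i, (j - m - 1 <= i < j)%nat -> v i <= beta) -> v j <= theta * beta.
Proof.
  intros Hj Hbeta.
  replace j with ((j - m - 1) + m + 1)%nat by lia.
  eapply Rle_trans; [apply v_rec|].
  unfold theta; rewrite (Rmult_comm (sum_f_R0 c m)), scal_sum.
  apply sum_Rle; intros i Hi.
  apply Rmult_le_compat_l; [auto|]. apply Hbeta; lia.
Qed.

Lemma lagged_bounded : forall j, v j <= sum_f_R0 v m.
Proof.
  assert (HB : 0 <= sum_f_R0 v m) by (apply cond_pos_sum; auto).
  assert (Hth : 0 <= theta) by (apply cond_pos_sum; auto).
  intro j; induction j as [j IH] using (well_founded_induction Wf_nat.lt_wf).
  destruct (Compare_dec.le_lt_dec j m) as [Hjm|Hjm].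
  - apply le_sum_term; auto.
  - apply Rle_trans with (theta * sum_f_R0 v m); [|unfold theta in *; nra].
    apply lagged_step; [exact Hjm|]. intros i Hi; apply IH; lia.
Qed.

Lemma lagged_geometric_bound :
  forall q j, (q * (m + 1) <= j)%nat -> v j <= sum_f_R0 v m * theta ^ q.
Proof.
  induction q as [|q IH]; intros j Hj.
  - simpl; rewrite Rmult_1_r; apply lagged_bounded.
  - replace (sum_f_R0 v m * theta ^ S q) with (theta * (sum_f_R0 v m * theta ^ q))
      by (simpl; ring).
    apply lagged_step; [lia|]. intros i Hi; apply IH; lia.
Qed.

Lemma lagged_vanishes : vanishes v.
Proof.
  apply (vanishes_geometric v (m + 1) (sum_f_R0 v m) theta).
  - apply cond_pos_sum; auto.
  - split; [apply cond_pos_sum; auto | exact theta_lt1].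
  - exact lagged_geometric_bound.
Qed.
End LaggedRecurrence.

Lemma vanishes_perturbed_contraction (r : R) (u w : nat -> R) : 0 <= r < 1 ->
  (forall n, 0 <= u n) -> (forall n, u (S n) <= r * u n + w n) ->
  vanishes w -> vanishes u.
Proof.
  intros Hr Hu Hrec Hw eps Heps.
  destruct (Hw (eps * (1 - r) / 2)) as [N HN].
  { apply Rdiv_lt_0_compat; [apply Rmult_lt_0_compat|]; lra. }
  (* after N the perturbation contributes at most eps/2 in total *)
  assert (Hd : forall d, u (N + d)%nat <= r ^ d * u N + eps / 2).
  { induction d as [|d IH].
    - rewrite Nat.add_0_r; simpl; pose proof (Hu N); lra.
    - replace (N + S d)%nat with (S (N + d)) by lia.
      eapply Rle_trans; [apply Hrec|].
      specialize (HN (N + d)%nat ltac:(lia)).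
      apply Rmult_le_compat_l with (r := r) in IH; [|lra].
      simpl. nra. }
  assert (Habs : Rabs r < 1) by (rewrite Rabs_right; lra).
  pose proof (Hu N) as HuN.
  destruct (pow_lt_1_zero r Habs (eps / (2 * (u N + 1)))) as [d0 Hd0].
  { apply Rdiv_lt_0_compat; lra. }
  exists (N + d0)%nat. intros n Hn.
  replace n with (N + (n - N))%nat by lia.
  eapply Rle_lt_trans; [apply Hd|].
  specialize (Hd0 (n - N)%nat ltac:(lia)).
  assert (Hpow : 0 <= r ^ (n - N)) by (apply pow_le; lra).
  rewrite Rabs_right in Hd0 by lra.
  apply Rmult_lt_compat_l with (r := u N + 1) in Hd0; [|lra].
  replace ((u N + 1) * (eps / (2 * (u N + 1)))) with (eps / 2) in Hd0 by (field; lra).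
  nra.
Qed.

Section BanachAlgebraFacts.
Variable X : BanachAlgebra.
Implicit Types x y z : X.

Lemma add0l x : add zero x = x.
Proof. rewrite add_comm; apply add_zero. Qed.
Lemma addNr x : add (opp x) x = zero.
Proof. rewrite add_comm; apply add_opp. Qed.
Lemma addNKl x z : add (opp x) (add x z) = z.
Proof. rewrite add_assoc, addNr; apply add0l. Qed.
Lemma add_cancel x y z : add x y = add x z -> y = z.
Proof. intro H. rewrite <- (addNKl x y), H. apply addNKl. Qed.
Lemma opp_unique x y : add x y = zero -> y = opp x.
Proof. intro H. apply (add_cancel x). rewrite H, add_opp. reflexivity. Qed.
Lemma opp_zero : opp (@zero X) = zero.
Proof. symmetry; apply opp_unique; apply add_zero. Qed.
Lemma opp_add x y : opp (add x y) = add (opp x) (opp y).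
Proof.
  symmetry; apply opp_unique.
  rewrite <- add_assoc, (add_comm _ (opp x)), (add_assoc _ y), add_opp, add0l, add_opp.
  reflexivity.
Qed.
Lemma addNK x y : add (add x (opp y)) y = x.
Proof. rewrite <- add_assoc, addNr; apply add_zero. Qed.
Lemma addK x y : add (add x y) (opp y) = x.
Proof. rewrite <- add_assoc, add_opp; apply add_zero. Qed.
Lemma addNCK x y : add (opp x) (add y x) = y.
Proof. rewrite (add_comm _ y x). apply addNKl. Qed.
Lemma add_swap x y z : add x (add y z) = add y (add x z).
Proof. rewrite !add_assoc, (add_comm _ x y). reflexivity. Qed.
Lemma mul0r x : mul zero x = zero.
Proof.
  apply (add_cancel (mul zero x)). rewrite add_zero, <- mul_addl, add_zero. reflexivity.
Qed.
Lemma mulr0 x : mul x zero = zero.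
Proof.
  apply (add_cancel (mul x zero)). rewrite add_zero, <- mul_addr, add_zero. reflexivity.
Qed.
Lemma mulNr x y : mul (opp x) y = opp (mul x y).
Proof. apply opp_unique. rewrite <- mul_addl, add_opp. apply mul0r. Qed.
Lemma mulrN x y : mul x (opp y) = opp (mul x y).
Proof. apply opp_unique. rewrite <- mul_addr, add_opp. apply mulr0. Qed.
Lemma scal0 x : scal 0 x = zero.
Proof.
  apply (add_cancel (scal 0 x)). rewrite add_zero, <- scal_addl, Rplus_0_l. reflexivity.
Qed.
Lemma scalN1 x : scal (-1) x = opp x.
Proof.
  apply opp_unique. rewrite <- (scal_one _ x) at 1. rewrite <- scal_addl.
  replace (1 + -1) with 0 by ring. apply scal0.
Qed.
Lemma norm_opp x : norm (opp x) = norm x.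
Proof.
  rewrite <- scalN1, norm_scal.
  replace (Rabs (-1)) with 1 by (rewrite Rabs_left; lra). ring.
Qed.
Lemma norm_ge0 x : 0 <= norm x.
Proof.
  pose proof (norm_triangle X x (opp x)) as H.
  rewrite add_opp, norm_zero, norm_opp in H. lra.
Qed.

Lemma bsum_ext K (f h : nat -> X) :
  (forall i, (i < K)%nat -> f i = h i) -> bsum K f = bsum K h.
Proof.
  induction K as [|K IH]; intro H; simpl; [reflexivity|].
  rewrite IH by (intros; apply H; lia). rewrite H by lia. reflexivity.
Qed.
Lemma bsum_opp K (f : nat -> X) : bsum K (fun i => opp (f i)) = opp (bsum K f).
Proof.
  induction K as [|K IH]; simpl; [symmetry; apply opp_zero|].
  rewrite IH, opp_add. reflexivity.
Qed.
Lemma bsum_mulN K (f w : nat -> X) :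
  bsum K (fun i => mul (opp (f i)) (w i)) = opp (bsum K (fun i => mul (f i) (w i))).
Proof. rewrite <- bsum_opp. apply bsum_ext. intros. apply mulNr. Qed.
Lemma bsum_mulr K (f : nat -> X) r : mul (bsum K f) r = bsum K (fun i => mul (f i) r).
Proof.
  induction K as [|K IH]; simpl; [apply mul0r|]. rewrite mul_addl, IH. reflexivity.
Qed.
Lemma bpow_S_r x n : bpow x (S n) = mul (bpow x n) x.
Proof.
  induction n as [|n IH]; simpl in *; [rewrite mul_one_l, mul_one_r; reflexivity|].
  rewrite IH, mul_assoc, IH. reflexivity.
Qed.

Lemma norm_linear_perturbed (sigma : R) (g : X -> X) K (c d w : nat -> X) :
  0 <= sigma -> (forall xi, norm (g xi) <= sigma * norm xi) ->
  norm (add (bsum (S K) (fun i => mul (c i) (w i)))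
            (g (bsum (S K) (fun i => mul (d i) (w i)))))
  <= sum_f_R0 (fun i => (norm (c i) + sigma * norm (d i)) * norm (w i)) K.
Proof.
  intros Hs Hg.
  eapply Rle_trans; [apply norm_triangle|].
  eapply Rle_trans; [apply Rplus_le_compat_l, Hg|].
  induction K as [|K IH].
  - simpl. rewrite !add0l.
    pose proof (norm_mul X (c 0%nat) (w 0%nat)).
    pose proof (norm_mul X (d 0%nat) (w 0%nat)). nra.
  - change (bsum (S (S K)) ?f) with (add (bsum (S K) f) (f (S K))).
    simpl sum_f_R0.
    pose proof (norm_triangle X (bsum (S K) (fun i => mul (c i) (w i))) (mul (c (S K)) (w (S K)))).
    pose proof (norm_triangle X (bsum (S K) (fun i => mul (d i) (w i))) (mul (d (S K)) (w (S K)))).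
    pose proof (norm_mul X (c (S K)) (w (S K))).
    pose proof (norm_mul X (d (S K)) (w (S K))). nra.
Qed.

Lemma bsum_shift (c : nat -> X) (rho : X) i :
  mul (bsum (S i) (fun j => mul (c j) (bpow rho (i - j)))) rho
  = bsum (S i) (fun j => mul (c j) (bpow rho (S i - j))).
Proof.
  rewrite bsum_mulr. apply bsum_ext. intros j Hj.
  rewrite <- mul_assoc, <- bpow_S_r. f_equal. f_equal. lia.
Qed.

Lemma pcoef0 (a : nat -> X) rho : pcoef a rho 0 = add (mul one rho) (opp (a 0%nat)).
Proof.
  unfold pcoef, sub; simpl. rewrite mul_one_r, mul_one_l, add0l, mul_one_r. reflexivity.
Qed.
Lemma pcoefS (a : nat -> X) rho i :
  pcoef a rho (S i) = add (mul (pcoef a rho i) rho) (opp (a (S i))).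
Proof.
  unfold pcoef, sub. rewrite mul_addl, mulNr, bsum_shift, <- bpow_S_r.
  change (bsum (S (S i)) ?f) with (add (bsum (S i) f) (f (S i))). cbv beta.
  rewrite Nat.sub_diag. simpl bpow. rewrite mul_one_r, opp_add, add_assoc. reflexivity.
Qed.
Lemma qcoef0 (b : nat -> X) rho : qcoef b rho 0 = add (mul zero rho) (b 0%nat).
Proof. unfold qcoef; simpl. rewrite mul0r, !add0l, mul_one_r. reflexivity. Qed.
Lemma qcoefS (b : nat -> X) rho i :
  qcoef b rho (S i) = add (mul (qcoef b rho i) rho) (b (S i)).
Proof.
  unfold qcoef. rewrite bsum_shift.
  change (bsum (S (S i)) ?f) with (add (bsum (S i) f) (f (S i))). cbv beta.
  rewrite Nat.sub_diag. simpl bpow. rewrite mul_one_r. reflexivity.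
Qed.

Lemma telescope (x z : nat -> X) (rho e : X) (c d : nat -> X)
  (hz : forall j, z j = sub (x (S j)) (mul rho (x j)))
  (h0 : c 0%nat = add (mul e rho) (d 0%nat))
  (hS : forall i, c (S i) = add (mul (c i) rho) (d (S i))) (T : nat) :
  forall K, (K <= T)%nat ->
  add (mul e (z T)) (bsum K (fun i => mul (c i) (z (T - 1 - i)%nat)))
  = add (mul e (x (S T))) (add (opp (mul (c K) (x (T - K)%nat)))
                               (bsum (S K) (fun i => mul (d i) (x (T - i)%nat)))).
Proof.
  induction K as [|K IH]; intro HK.
  - simpl bsum. rewrite Nat.sub_0_r, add_zero, add0l, hz, h0. unfold sub.
    rewrite mul_addr, mulrN, mul_addl, opp_add, mul_assoc, addNK. reflexivity.
  - change (bsum (S K) ?f) with (add (bsum K f) (f K)) at 1.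
    rewrite add_assoc, IH by lia.
    change (bsum (S (S K)) ?f) with (add (bsum (S K) f) (f (S K))).
    rewrite hz, hS. unfold sub.
    replace (S (T - 1 - K)) with (T - K)%nat by lia.
    replace (T - 1 - K)%nat with (T - S K)%nat by lia.
    rewrite mul_addr, mulrN, mul_assoc, mul_addl, opp_add, <- !add_assoc.
    f_equal.
    rewrite add_swap, addNKl, addNCK.
    apply add_comm.
Qed.
End BanachAlgebraFacts.
Lemma perturbed_recurrence_vanishes (X : BanachAlgebra) (m : nat) (c d : nat -> X)
  (g : nat -> X -> X) (sigma : R) (w : nat -> X) :
  0 <= sigma -> (forall n xi, norm (g n xi) <= sigma * norm xi) ->
  sum_f_R0 (fun i => norm (c i) + sigma * norm (d i)) m < 1 ->
  (forall n, w (n + m + 1)%nat =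
     add (bsum (S m) (fun i => mul (c i) (w (n + m - i)%nat)))
         (g n (bsum (S m) (fun i => mul (d i) (w (n + m - i)%nat))))) ->
  vanishes (fun n => norm (w n)).
Proof.
  intros Hs Hg Hsum Hrec.
  apply (lagged_vanishes m (fun i => norm (c i) + sigma * norm (d i))).
  - intro i. pose proof (norm_ge0 X (c i)); pose proof (norm_ge0 X (d i)); nra.
  - intro n; apply norm_ge0.
  - exact Hsum.
  - intro n; rewrite Hrec.
    exact (norm_linear_perturbed X sigma (g n) m c d (fun i => w (n + m - i)%nat) Hs (Hg n)).
Qed.

Lemma difference_recurrence (X : BanachAlgebra) (m : nat) (a b : nat -> X)
  (g : nat -> X -> X) (rho : X) (y : nat -> X) :
  polyP (S m) a rho = zero -> polyQ (S m) b rho = zero ->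
  (forall n, y (n + S m + 1)%nat =
     add (bsum (S (S m)) (fun i => mul (a i) (y (n + S m - i)%nat)))
         (g n (bsum (S (S m)) (fun i => mul (b i) (y (n + S m - i)%nat))))) ->
  let z := fun j => sub (y (S j)) (mul rho (y j)) in
  forall n, z (n + m + 1)%nat =
    add (bsum (S m) (fun i => mul (opp (pcoef a rho i)) (z (n + m - i)%nat)))
        (g n (bsum (S m) (fun i => mul (qcoef b rho i) (z (n + m - i)%nat)))).
Proof.
  intros HP HQ Hrec z n.
  assert (Hz : forall j, z j = sub (y (S j)) (mul rho (y j))) by reflexivity.
  pose proof (telescope X y z rho one (pcoef a rho) (fun i => opp (a i)) Hz
                (pcoef0 X a rho) (pcoefS X a rho) (n + S m) (S m) ltac:(lia)) as Hp.
  pose proof (telescope X y z rho zero (qcoef b rho) b Hz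
                (qcoef0 X b rho) (qcoefS X b rho) (n + S m) (S m) ltac:(lia)) as Hq.
  change (pcoef a rho (S m)) with (polyP (S m) a rho) in Hp.
  change (qcoef b rho (S m)) with (polyQ (S m) b rho) in Hq.
  rewrite HP, !mul0r, opp_zero, add0l, !mul_one_l, bsum_mulN in Hp.
  rewrite HQ, !mul0r, opp_zero, !add0l in Hq.
  replace (S (n + S m)) with (n + S m + 1)%nat in Hp by lia.
  rewrite Hrec, <- Hq, (add_comm _ (bsum (S (S m)) _) (g n _)), addK in Hp.
  assert (Hidx : forall (e : nat -> X),
    bsum (S m) (fun i => mul (e i) (z (n + S m - 1 - i)%nat))
    = bsum (S m) (fun i => mul (e i) (z (n + m - i)%nat))).
  { intro e; apply bsum_ext; intros i Hi. do 3 f_equal. lia. }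
  rewrite !Hidx in Hp.
  replace (n + m + 1)%nat with (n + S m)%nat by lia.
  rewrite bsum_mulN, <- Hp, addNCK.
  reflexivity.
Qed.

(* Case (b), analytic part: z_n -> 0 by the key estimate, and then
   |y_{n+1}| <= |rho| |y_n| + |z_n| with |rho| < 1 gives y_n -> 0. *)
Lemma common_root_case (X : BanachAlgebra) (m : nat) (a b : nat -> X)
  (g : nat -> X -> X) (sigma : R) (rho : X) (y : nat -> X) :
  0 <= sigma -> (forall n xi, norm (g n xi) <= sigma * norm xi) ->
  norm rho < 1 -> polyP (S m) a rho = zero -> polyQ (S m) b rho = zero ->
  sum_f_R0 (fun i => norm (pcoef a rho i) + sigma * norm (qcoef b rho i)) m < 1 ->
  (forall n, y (n + S m + 1)%nat =
     add (bsum (S (S m)) (fun i => mul (a i) (y (n + S m - i)%nat)))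
         (g n (bsum (S (S m)) (fun i => mul (b i) (y (n + S m - i)%nat))))) ->
  vanishes (fun n => norm (y n)).
Proof.
  intros Hs Hg Hrho HP HQ Hsum Hrec.
  set (z := fun j => sub (y (S j)) (mul rho (y j))).
  assert (Hz : vanishes (fun n => norm (z n))).
  { apply (perturbed_recurrence_vanishes X m (fun i => opp (pcoef a rho i))
             (qcoef b rho) g sigma z Hs Hg).
    - eapply Rle_lt_trans; [right; apply sum_eq | exact Hsum].
      intros i _. cbv beta. rewrite norm_opp. reflexivity.
    - exact (difference_recurrence X m a b g rho y HP HQ Hrec). }
  apply (vanishes_perturbed_contraction (norm rho) _ (fun n => norm (z n))).
  - split; [apply norm_ge0 | exact Hrho].
  - intro n; apply norm_ge0.
  - intro n.
    assert (Hy : y (S n) = add (z n) (mul rho (y n))) by (unfold z, sub; rewrite addNK; reflexivity).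
    rewrite Hy. eapply Rle_trans; [apply norm_triangle|].
    pose proof (norm_mul X rho (y n)). lra.
  - exact Hz.
Qed.

Theorem theorem1 (X : BanachAlgebra) (k : nat) (hk : (1 <= k)%nat)
  (a b : nat -> X) (hab : a k <> zero \/ b k <> zero)
  (g : nat -> X -> X) (sigma : R) (hsigma : 0 < sigma)
  (hg : forall (n : nat) (xi : X), norm (g n xi) <= sigma * norm xi)
  (hcond :
     sum_f_R0 (fun i => norm (a i) + sigma * norm (b i)) k < 1
     \/
     (exists rho : X, is_unit rho /\ norm rho < 1 /\
        polyP k a rho = zero /\ polyQ k b rho = zero /\
        sum_f_R0 (fun i => norm (pcoef a rho i) + sigma * norm (qcoef b rho i))
                 (k - 1) < 1))
  (y : nat -> X)
  (hrec : forall n : nat,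
     y (n + k + 1)%nat =
       add (bsum (S k) (fun i => mul (a i) (y (n + k - i)%nat)))
           (g n (bsum (S k) (fun i => mul (b i) (y (n + k - i)%nat))))) :
  conv_to_zero y.
Proof.
  assert (Hsig : 0 <= sigma) by lra.
  destruct hcond as [Hsum | [rho [_ [Hrho [HP [HQ Hsum]]]]]].
  -
    exact (perturbed_recurrence_vanishes X k a b g sigma y Hsig hg Hsum hrec).
  -
    destruct k as [|m]; [lia|].
    replace (S m - 1)%nat with m in Hsum by lia.
    exact (common_root_case X m a b g sigma rho y Hsig hg Hrho HP HQ Hsum hrec).
Qed.
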